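(* Let $N_1$ and $N_2$ be phylogenetic networks on the same set $S$ of taxa, and assume that either (a) $N_1$ and $N_2$ are both tree-child, or (b) $N_1$ and $N_2$ are both semi-binary, time consistent and tree-sibling. Then $\Upsilon(N_1)=\Upsilon(N_2)$ implies $N_1\cong N_2$. Consequently $m(N_1,N_2)=\frac12|\Upsilon(N_1)\bigtriangleup\Upsilon(N_2)|$ is a metric on the class of tree-child phylogenetic networks on $S$ and on the class of semi-binary time consistent tree-sibling phylogenetic networks on $S$.
   Context: A phylogenetic network on a finite set $S$ of taxa is a finite rooted directed acyclic graph whose leaves (nodes without children) are bijectively labeled by $S$; isomorphism $\cong$ means a digraph isomorphism preserving leaf labels. A tree node has at most one parent; a hybrid node has more than one parent. Two children of a common parent are siblings. $N$ is tree-child if every internal node has a child that is a tree node; tree-sibling if every hybrid node has a sibling that is a tree node; semi-binary if every hybrid node has exactly two parents; time consistent if there is a map $\tau:V\to\mathbb N$ with $\tau(u)<\tau(v)$ for every arc $(u,v)$ with $v$ a tree node and $\tau(u)=\tau(v)$ for every arc $(u,v)$ with $v$ hybrid. The height of a node is the largest length of a path from it to a leaf. The nested label $\ell(v)$ is defined inductively: $\ell(v)=\{i\}$ if $v$ is the leaf labeled $i$, and otherwise $\ell(v)$ is the multiset $\{\ell(v_1),\dots,\ell(v_k)\}$ of nested labels of the children $v_1,\dots,v_k$ of $v$. $\Upsilon(N)$ is the multiset of nested labels of all nodes of $N$; $|\cdot|$ of a multiset is the sum of multiplicities and $\bigtriangleup$ is multiset symmetric difference (multiplicity $|M_1(x)-M_2(x)|$).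 *)

From mathcomp Require Import all_boot all_order all_algebra.
Set Implicit Arguments. Unset Strict Implicit. Unset Printing Implicit Defensive.
Import GRing.Theory Num.Theory.

Record phylo_network (S : finType) := PhyloNetwork {
  node : finType;
  arc : rel node;
  root : node;
  taxon : S -> node;
  arc_acyclic : forall u v, arc u v -> ~~ connect arc v u;
  root_noparent : forall u, ~~ arc u root;
  root_reach : forall v, connect arc root v;
  taxon_inj : injective taxon;
  taxon_leaves : forall v, (forall w, ~~ arc v w) <-> (exists i, taxon i = v)
}.

Arguments arc {S} _ _ _.
Arguments root {S} _.
Arguments taxon {S} _ _.

Section Defs.
Variable S : finType.
Implicit Types N : phylo_network S.

Definition parents N (v : node N) : {set node N} := [set u | arc N u v].
Definition children N (v : node N) : {set node N} := [set w | arc N v w].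
Definition is_leaf N (v : node N) : bool := children v == set0.
Definition is_tree_node N (v : node N) : bool := #|parents v| <= 1.
Definition is_hybrid N (v : node N) : bool := 1 < #|parents v|.

Definition tree_child N : Prop :=
  forall v : node N, ~~ is_leaf v -> exists w, arc N v w /\ is_tree_node w.

Definition tree_sibling N : Prop :=
  forall v : node N, is_hybrid v ->
    exists u w, [/\ arc N u v, arc N u w, w != v & is_tree_node w].

Definition semi_binary N : Prop :=
  forall v : node N, is_hybrid v -> #|parents v| = 2.

Definition time_consistent N : Prop :=
  exists tau : node N -> nat, forall u v, arc N u v ->
    (is_tree_node v -> tau u < tau v) /\ (is_hybrid v -> tau u = tau v).

Definition sb_tc_ts N : Prop :=
  [/\ semi_binary N, time_consistent N & tree_sibling N].

Definition net_iso N1 N2 : Prop :=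
  exists f : node N1 -> node N2,
    [/\ bijective f,
        forall u v, arc N2 (f u) (f v) = arc N1 u v
      & forall i, f (taxon N1 i) = taxon N2 i].

(* A nested label is represented by a canonical finite tree:
   GenTree.Leaf i  stands for {i}, and  GenTree.Node 0 s  stands for the
   multiset of the elements of s, where s is kept sorted w.r.t. a fixed total
   order (the injective countType encoding), so that two nested labels are
   equal as nested multisets iff their representations are (Leibniz) equal. *)
Definition nlabel := GenTree.tree S.
Definition nl_le (a b : nlabel) : bool := pickle a <= pickle b.

Definition taxon_of N (v : node N) : option S := [pick i | taxon N i == v].

(* l(v) computed with fuel n; fuel #|node N| is enough since N is a DAG. *)
Fixpoint nlabel_rec N (n : nat) (v : node N) : nlabel :=
  match taxon_of v with
  | Some i => GenTree.Leaf i
  | None =>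
    match n with
    | 0 => GenTree.Node 0 [::]
    | n'.+1 => GenTree.Node 0
        (sort nl_le [seq nlabel_rec n' w | w <- enum (children v)])
    end
  end.

Definition nested_label N (v : node N) : nlabel := nlabel_rec #|node N| v.

(* Upsilon(N): the multiset of nested labels of all nodes, as a sequence
   (multiset equality = perm_eq). *)
Definition Upsilon N : seq nlabel := [seq nested_label v | v <- enum (node N)].

Definition msymdiff_size (M1 M2 : seq nlabel) : nat :=
  \sum_(x <- undup (M1 ++ M2))
     ((count_mem x M1 - count_mem x M2) + (count_mem x M2 - count_mem x M1)).

Definition mu_dist N1 N2 : rat :=
  ((msymdiff_size (Upsilon N1) (Upsilon N2))%:R / 2)%R.

Definition metric_on (C : phylo_network S -> Prop)
    (d : phylo_network S -> phylo_network S -> rat) : Prop :=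
  forall N1 N2 N3, C N1 -> C N2 -> C N3 ->
    [/\ (0 <= d N1 N2)%R,
        d N1 N2 = 0%R <-> net_iso N1 N2,
        d N1 N2 = d N2 N1
      & (d N1 N3 <= d N1 N2 + d N2 N3)%R].

End Defs.

(* Two nodes with the same nested label have the same children: the label of
   an internal node is the multiset of the labels of its children, and, by
   induction on the number of descendants, a child label determines the child.
   In a tree-child network, and in a semi-binary tree-sibling one, distinct
   internal nodes never have exactly the same children: every common child
   would be a hybrid whose only parents are these two nodes, leaving no room
   for a tree child or a tree sibling.  Hence nested labels are injective, and [Upsilon N1 = Upsilon N2] yields a
   label-preserving bijection, which preserves arcs because the label of a
   child is read off the label of its parent.  The metric axioms then reduce
   to those of the multiset symmetric difference. *)

From Pilot Require Import Defs.
From mathcomp Require Import all_boot all_order all_algebra.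
From mathcomp Require Import zify.

Set Implicit Arguments. Unset Strict Implicit. Unset Printing Implicit Defensive.

Local Notation arc := Defs.arc.

Lemma perm_eq_sort_nl_le (S : finType) (s t : seq (nlabel S)) :
  reflect (sort (@nl_le S) s = sort (@nl_le S) t) (perm_eq s t).
Proof.
apply: perm_sortP.
- by move=> a b; apply: leq_total.
- by move=> a b c; apply: leq_trans.
- by move=> a b /andP[ab ba]; apply: (pcan_inj pickleK); apply/eqP; rewrite eqn_leq; exact/andP.
Qed.

Section Network.
Variables (S : finType) (N : phylo_network S).
Implicit Types u v w c : node N.

Definition ndesc v := #|[set w | connect (arc N) v w]|.

Lemma ndesc_gt0 v : 0 < ndesc v.
Proof. by apply/card_gt0P; exists v; rewrite inE connect0. Qed.

Lemma ndesc_arc u v : arc N u v -> ndesc v < ndesc u.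
Proof.
move=> uv; apply/proper_card/properP; split.
  by apply/subsetP => x; rewrite !inE; apply: connect_trans (connect1 uv).
by exists u; rewrite !inE ?connect0 ?arc_acyclic.
Qed.

Lemma is_tree_nodeE v : is_tree_node v = ~~ is_hybrid v.
Proof. by rewrite /is_tree_node /is_hybrid leqNgt. Qed.

Lemma arc_eq_children u v c : children u = children v -> arc N u c = arc N v c.
Proof. by move=> E; have := congr1 (fun A : {set node N} => c \in A) E; rewrite !inE. Qed.

Lemma taxon_of_taxon i : taxon_of (taxon N i) = Some i.
Proof.
rewrite /taxon_of; case: pickP => [j /eqP/taxon_inj -> //|/(_ i)].
by rewrite eqxx.
Qed.

Lemma taxon_ofP v i : taxon_of v = Some i -> taxon N i = v.
Proof. by rewrite /taxon_of; case: pickP => // j /eqP h [<-]. Qed.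

Lemma taxon_of_arc u v : arc N u v -> taxon_of u = None.
Proof.
case hu: (taxon_of u) => [i|] // uv.
by have /negP := proj2 (taxon_leaves u) (ex_intro _ i (taxon_ofP hu)) v.
Qed.

Lemma leaf_taxon v : is_leaf v -> exists i, taxon N i = v.
Proof.
move=> /eqP leaf_v; apply/(taxon_leaves v) => w.
by apply/negP => vw; have := in_set0 w; rewrite -leaf_v inE vw.
Qed.

Lemma nlabel_rec_stable m n v :
  ndesc v <= m -> ndesc v <= n -> nlabel_rec m v = nlabel_rec n v.
Proof.
elim: m n v => [|m IH] n v hm hn; first by have := ndesc_gt0 v; lia.
case: n hn => [|n] hn; first by have := ndesc_gt0 v; lia.
rewrite /=; case: (taxon_of v) => [i|] //; congr (GenTree.Node 0 (sort _ _)).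
apply/eq_in_map => w; rewrite mem_enum inE => /ndesc_arc vw.
by apply: IH; lia.
Qed.

Lemma nested_label_taxon i : nested_label (taxon N i) = GenTree.Leaf i.
Proof. by rewrite /nested_label; case: #|node N| => [|n] /=; rewrite taxon_of_taxon. Qed.

Lemma nested_labelE v : taxon_of v = None ->
  nested_label v =
  GenTree.Node 0 (sort (@nl_le S) [seq nested_label w | w <- enum (children v)]).
Proof.
move=> hv; have [k Ek] : exists k, ndesc v = k.+1.
  by exists (ndesc v).-1; rewrite prednK ?ndesc_gt0.
rewrite [LHS](@nlabel_rec_stable _ k.+1) ?max_card ?Ek //=.
move: hv; case: (taxon_of v) => // _.
congr (GenTree.Node 0 (sort _ _)); apply/eq_in_map => w.
rewrite mem_enum inE => /ndesc_arc vw.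
by apply: nlabel_rec_stable; rewrite ?max_card //; lia.
Qed.

Definition twin_free :=
  forall u v, ~~ is_leaf u -> children u = children v -> u = v.

Lemma shared_child_hybrid u v c : u != v -> arc N u c -> arc N v c -> is_hybrid c.
Proof.
move=> neq uc vc; rewrite /is_hybrid.
have : [set u; v] \subset parents c by apply/subsetP => x; rewrite !inE => /orP[]/eqP->.
by move/subset_leq_card; rewrite cards2 neq.
Qed.

Lemma tree_child_twin_free : tree_child N -> twin_free.
Proof.
move=> tc u v nleaf_u Ech; case: (eqVneq u v) => [//|neq].
have [c [uc tree_c]] := tc u nleaf_u.
have vc : arc N v c by rewrite -(arc_eq_children _ Ech).
by move: tree_c; rewrite is_tree_nodeE (shared_child_hybrid neq uc vc).
Qed.

Lemma tree_sibling_twin_free : semi_binary N -> tree_sibling N -> twin_free.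
Proof.
move=> sb ts u v /set0Pn[c]; rewrite inE => uc Ech; case: (eqVneq u v) => [//|neq].
have vc : arc N v c by rewrite -(arc_eq_children _ Ech).
have hyb_c := shared_child_hybrid neq uc vc.
have parents_c : parents c = [set u; v].
  apply/esym/eqP; rewrite eqEcard cards2 neq (sb c hyb_c) andbT.
  by apply/subsetP => x; rewrite !inE => /orP[]/eqP->.
have [p [w [pc pw wc tree_w]]] := ts c hyb_c.
have uw : arc N u w.
  have : p \in parents c by rewrite inE.
  rewrite parents_c !inE => /orP[]/eqP Ep; subst p; first by [].
  by rewrite (arc_eq_children _ Ech).
have vw : arc N v w by rewrite -(arc_eq_children _ Ech).
by move: tree_w; rewrite is_tree_nodeE (shared_child_hybrid neq uw vw).
Qed.

End Network.

Arguments twin_free {S} N.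

Section NestedLabels.
Variable S : finType.
Implicit Types N : phylo_network S.

Lemma nested_label_child N1 N2 (u : node N1) (y : node N2) c :
  nested_label y = nested_label u -> arc N1 u c ->
  exists2 c', arc N2 y c' & nested_label c' = nested_label c.
Proof.
move=> yu uc; have hu := taxon_of_arc uc.
have hy : taxon_of y = None.
  case hy: (taxon_of y) => [i|] //; move: yu.
  by rewrite -(taxon_ofP hy) nested_label_taxon (nested_labelE hu).
move: yu; rewrite (nested_labelE hu) (nested_labelE hy).
case=> /perm_eq_sort_nl_le/perm_mem children_yu.
have : nested_label c \in [seq nested_label w | w <- enum (children y)].
  by rewrite children_yu; apply/mapP; exists c; rewrite ?mem_enum ?inE.
by case/mapP => c'; rewrite mem_enum inE => yc' ->; exists c'.
Qed.

Lemma nested_label_inj N : twin_free N -> injective (@nested_label S N).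
Proof.
move=> tf u v; have [n] := ubnP (ndesc u + ndesc v).
elim: n u v => // n IH u v lt_n uv.
have child_eq c c' : arc N u c -> arc N v c' ->
    nested_label c = nested_label c' -> c = c'.
  by move=> /ndesc_arc uc /ndesc_arc vc'; apply: IH; lia.
have Ech : children u = children v.
  apply/setP => c; rewrite !inE; apply/idP/idP => [uc|vc].
    by have [c' vc' /esym/(child_eq _ _ uc vc') ->] := nested_label_child (esym uv) uc.
  by have [c' uc' /(child_eq _ _ uc' vc) <-] := nested_label_child uv vc.
case: (boolP (is_leaf u)) => [leaf_u|]; last by move/tf; apply.
have leaf_v : is_leaf v by rewrite /is_leaf -Ech.
move: uv; have [i <-] := leaf_taxon leaf_u; have [j <-] := leaf_taxon leaf_v.
by rewrite !nested_label_taxon => -[->].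
Qed.

Lemma arc_nested_label N1 N2 (f : node N1 -> node N2) :
  injective (@nested_label S N2) -> (forall u, nested_label (f u) = nested_label u) ->
  forall u v, arc N1 u v -> arc N2 (f u) (f v).
Proof.
move=> inj2 Ef u v uv; have [c fuc Ec] := nested_label_child (Ef u) uv.
by rewrite (inj2 (f v) c) // Ef Ec.
Qed.

Lemma nested_label_transport N1 N2 : perm_eq (Upsilon N1) (Upsilon N2) ->
  exists f : node N1 -> node N2, forall u, nested_label (f u) = nested_label u.
Proof.
move=> eqU.
have ex (u : node N1) : exists y : node N2, nested_label y == nested_label u.
  have : nested_label u \in Upsilon N2.
    by rewrite -(perm_mem eqU); apply/mapP; exists u; rewrite ?mem_enum.
  by case/mapP => y _ ->; exists y.
by exists (fun u => xchoose (ex u)) => u; apply/eqP/(xchooseP (ex u)).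
Qed.

Lemma net_iso_of_perm_Upsilon N1 N2 :
  injective (@nested_label S N1) -> injective (@nested_label S N2) ->
  perm_eq (Upsilon N1) (Upsilon N2) -> net_iso N1 N2.
Proof.
move=> inj1 inj2 eqU.
have [f Ef] := nested_label_transport eqU.
rewrite perm_sym in eqU; have [g Eg] := nested_label_transport eqU.
have fK : cancel f g by move=> u; apply: inj1; rewrite Eg Ef.
have gK : cancel g f by move=> y; apply: inj2; rewrite Ef Eg.
exists f; split; first by exists g.
- move=> u v; apply/idP/idP => [/(arc_nested_label inj1 Eg)|].
    by rewrite !fK.
  exact: arc_nested_label inj2 Ef u v.
- by move=> i; apply: inj2; rewrite Ef !nested_label_taxon.
Qed.

Lemma nested_label_iso N1 N2 (f : node N1 -> node N2) : bijective f ->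
  (forall u v, arc N2 (f u) (f v) = arc N1 u v) ->
  (forall i, f (taxon N1 i) = taxon N2 i) ->
  forall u, nested_label (f u) = nested_label u.
Proof.
move=> bij_f farc ftaxon u; have [g fK gK] := bij_f.
have [n] := ubnP (ndesc u); elim: n u => // n IH u lt_n.
case hu: (taxon_of u) => [i|].
  by rewrite -(taxon_ofP hu) ftaxon !nested_label_taxon.
have hfu : taxon_of (f u) = None.
  case hfu: (taxon_of (f u)) => [i|] //; move: hu.
  have fu_taxon : f u = f (taxon N1 i) by rewrite ftaxon (taxon_ofP hfu).
  by rewrite (can_inj fK fu_taxon) taxon_of_taxon.
have children_fu : perm_eq (enum (children (f u))) (map f (enum (children u))).
  apply: uniq_perm; rewrite ?enum_uniq ?(map_inj_uniq (can_inj fK)) ?enum_uniq //.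
  by move=> y; rewrite mem_enum inE -[y]gK farc (mem_map (can_inj fK)) mem_enum inE.
rewrite (nested_labelE hu) (nested_labelE hfu); congr (GenTree.Node 0 _).
have labels_children : {in enum (children u), @nested_label S N2 \o f =1 @nested_label S N1}.
  by move=> w; rewrite mem_enum inE => /ndesc_arc uw /=; apply: IH; lia.
apply/perm_eq_sort_nl_le; apply: perm_trans (perm_map _ children_fu) _.
by rewrite -map_comp (proj1 (eq_in_map _ _ _) labels_children).
Qed.

Lemma perm_Upsilon_iso N1 N2 : net_iso N1 N2 -> perm_eq (Upsilon N1) (Upsilon N2).
Proof.
case=> f [bij_f farc ftaxon]; have [g fK gK] := bij_f.
have enum_f : perm_eq (map f (enum (node N1))) (enum (node N2)).
  apply: uniq_perm; rewrite ?enum_uniq ?(map_inj_uniq (can_inj fK)) ?enum_uniq //.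
  by move=> y; rewrite mem_enum -[y]gK map_f ?mem_enum.
apply: perm_trans _ (perm_map _ enum_f); rewrite /Upsilon.
have label_f : @nested_label S N2 \o f =1 @nested_label S N1 := nested_label_iso bij_f farc ftaxon.
by rewrite -(eq_map label_f) map_comp.
Qed.

End NestedLabels.

Section SymmetricDifference.
Variable T : eqType.
Implicit Types A B C U : seq T.

Definition count_dist A B x :=
  (count_mem x A - count_mem x B) + (count_mem x B - count_mem x A).

Definition msymdiff A B := \sum_(x <- undup (A ++ B)) count_dist A B x.

Lemma msymdiffE A B U :
  uniq U -> {subset A ++ B <= U} -> msymdiff A B = \sum_(x <- U) count_dist A B x.
Proof.
move=> uniqU subU.
rewrite (bigID (mem (A ++ B))) /= [X in _ + X]big1 ?addn0; last first.
  move=> x; rewrite mem_cat negb_or => /andP[xA xB].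
  by rewrite /count_dist !(count_memPn xA) !(count_memPn xB).
rewrite -big_filter; apply: perm_big; apply: uniq_perm.
- exact: undup_uniq.
- exact: filter_uniq.
by move=> x; rewrite mem_undup mem_filter; case: (boolP (x \in A ++ B)) => // /subU ->.
Qed.

Lemma msymdiffC A B : msymdiff A B = msymdiff B A.
Proof.
rewrite [RHS](@msymdiffE _ _ (undup (A ++ B))) ?undup_uniq //.
  by apply: eq_bigr => x _; rewrite /count_dist addnC.
by move=> x; rewrite mem_undup !mem_cat orbC.
Qed.

Lemma msymdiff_triangle A B C : msymdiff A C <= msymdiff A B + msymdiff B C.
Proof.
have uniqU := undup_uniq (A ++ B ++ C).
have sub X Y : {subset X <= A ++ B ++ C} -> {subset Y <= A ++ B ++ C} ->
    {subset X ++ Y <= undup (A ++ B ++ C)}.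
  by move=> sX sY x; rewrite mem_undup mem_cat => /orP[/sX|/sY].
rewrite !(msymdiffE uniqU) -?big_split /=.
  by apply: leq_sum => x _; rewrite /count_dist; lia.
all: by apply: sub => x; rewrite !mem_cat => ->; rewrite ?orbT.
Qed.

Lemma msymdiff_eq0 A B : (msymdiff A B == 0) = perm_eq A B.
Proof.
rewrite /msymdiff sum_nat_seq_eq0 /perm_eq; apply/allP/allP => eqAB x.
  move=> xAB; apply/eqP; have := eqAB x; rewrite mem_undup xAB => /(_ isT) /eqP.
  by rewrite /count_dist; lia.
by rewrite mem_undup /count_dist => /eqAB /eqP ->; rewrite subnn.
Qed.

End SymmetricDifference.

Section Metric.
Import GRing.Theory Num.Theory.
Local Open Scope ring_scope.

Lemma metric_on_mu_dist (S : finType) (C : phylo_network S -> Prop) :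
  (forall N1 N2, C N1 -> C N2 -> perm_eq (Upsilon N1) (Upsilon N2) -> net_iso N1 N2) ->
  metric_on C (@mu_dist S).
Proof.
move=> iso_of_perm N1 N2 N3 C1 C2 C3; rewrite /mu_dist /msymdiff_size -!/(msymdiff _ _).
split.
- by rewrite divr_ge0 ?ler0n.
- split=> [/eqP|/perm_Upsilon_iso]; last by rewrite -msymdiff_eq0 => /eqP ->; rewrite mul0r.
  rewrite mulf_eq0 invr_eq0 !pnatr_eq0 orbF msymdiff_eq0.
  exact: iso_of_perm.
- by rewrite msymdiffC.
- by rewrite -mulrDl ler_pM2r ?invr_gt0 // -natrD ler_nat msymdiff_triangle.
Qed.

End Metric.

Theorem corollary3 (S : finType) :
  (forall N1 N2 : phylo_network S,
      (tree_child N1 /\ tree_child N2) \/ (sb_tc_ts N1 /\ sb_tc_ts N2) ->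
      perm_eq (Upsilon N1) (Upsilon N2) -> net_iso N1 N2)
  /\ metric_on (@tree_child S) (@mu_dist S)
  /\ metric_on (@sb_tc_ts S) (@mu_dist S).
Proof.
have twin_free_class (N : phylo_network S) : tree_child N \/ sb_tc_ts N -> twin_free N.
  case=> [|[sb _ ts]]; [exact: tree_child_twin_free | exact: tree_sibling_twin_free].
have iso (N1 N2 : phylo_network S) :
    (tree_child N1 /\ tree_child N2) \/ (sb_tc_ts N1 /\ sb_tc_ts N2) ->
    perm_eq (Upsilon N1) (Upsilon N2) -> net_iso N1 N2.
  by case=> -[h1 h2]; apply: net_iso_of_perm_Upsilon; apply: nested_label_inj;
    apply: twin_free_class; [left | left | right | right].
split; first exact: iso.
by split; apply: metric_on_mu_dist => N1 N2 h1 h2; apply: iso; [left | right].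
Qed.
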